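(* Let $A\in\mathbb{R}^{m\times n}$ with $m>n$ be a full-rank standardized matrix with no two distinct rows parallel. Let $x\in\mathbb{R}^n$, $w\in\mathbb{R}^m$, and $b=Ax+w$. Let $x_k$ denote the $k$-th iterate of the two-subspace Kaczmarz method applied to $(A,b)$ from a deterministic starting point $x_0$. Then for every $k\ge0$, $$\mathbb{E}\|x-x_k\|_2\le\eta^{k/2}\|x-x_0\|_2+\frac{3}{1-\sqrt\eta}\cdot\frac{\|w\|_\infty}{\sqrt{1-\Delta^2}},$$ where $\eta=\left(1-\frac1R\right)^2-\frac DR$ and $D=\min\left\{\frac{\delta^2(1-\delta)}{1+\delta},\frac{\Delta^2(1-\Delta)}{1+\Delta}\right\}$.
   Context: $A\in\mathbb{R}^{m\times n}$ has rows $a_1,\dots,a_m$. It is called standardized if $\|a_i\|_2=1$ for all $i$. ''No two distinct rows parallel'' means $|\langle a_r,a_s\rangle|<1$ for all $r\ne s$. $\|w\|_\infty$ denotes the largest absolute value of an entry of $w$. Two-subspace Kaczmarz method for $(A,b)$, $b\in\mathbb{R}^m$: start from $x_0\in\mathbb{R}^n$. For $k=1,2,\dots$, choose an ordered pair $(r,s)$ of distinct indices in $\{1,\dots,m\}$ uniformly at random among the $m^2-m$ such pairs, independently of all previous choices. Then set $\mu_k=\langle a_r,a_s\rangle$, $y_k=x_{k-1}+(b_s-\langle x_{k-1},a_s\rangle)a_s$, $v_k=\frac{a_r-\mu_k a_s}{\sqrt{1-\mu_k^2}}$, $\beta_k=\frac{b_r-b_s\mu_k}{\sqrt{1-\mu_k^2}}$,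 and $x_k=y_k+(\beta_k-\langle y_k,v_k\rangle)v_k$. Coherence parameters: $\Delta=\max_{j\ne k}|\langle a_j,a_k\rangle|$ and $\delta=\min_{j\ne k}|\langle a_j,a_k\rangle|$. Scaled condition number: $R=\|A\|_F^2\|A^{-1}\|^2$, where $\|A^{-1}\|=\inf\{M: M\|Az\|_2\ge\|z\|_2\ \text{for all } z\}$, i.e. the reciprocal of the smallest singular value of $A$. *)

From Stdlib Require Import Reals Lra List.
Open Scope R_scope.

(* vectors in R^n : nat -> R (only indices < n matter);
   matrices in R^{m x n} : nat -> nat -> R, entry (i,j) = A i j. *)

Fixpoint rsum (n : nat) (f : nat -> R) : R :=
  match n with O => 0 | S p => rsum p f + f p end.

Definition dot (n : nat) (u v : nat -> R) : R := rsum n (fun j => u j * v j).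
Definition norm2 (n : nat) (u : nat -> R) : R := sqrt (dot n u u).
Definition vsub (u v : nat -> R) : nat -> R := fun j => u j - v j.

Definition row (A : nat -> nat -> R) (i : nat) : nat -> R := fun j => A i j.
Definition matvec (n : nat) (A : nat -> nat -> R) (z : nat -> R) : nat -> R :=
  fun i => dot n (row A i) z.

Fixpoint linf (m : nat) (w : nat -> R) : R :=
  match m with O => 0 | S p => Rmax (linf p w) (Rabs (w p)) end.

Definition frob2 (m n : nat) (A : nat -> nat -> R) : R :=
  rsum m (fun i => dot n (row A i) (row A i)).

Definition standardized (m n : nat) (A : nat -> nat -> R) : Prop :=
  forall i, (i < m)%nat -> norm2 n (row A i) = 1.

Definition no_parallel_rows (m n : nat) (A : nat -> nat -> R) : Prop :=
  forall r s, (r < m)%nat -> (s < m)%nat -> r <> s ->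
    Rabs (dot n (row A r) (row A s)) < 1.

Definition full_rank (m n : nat) (A : nat -> nat -> R) : Prop :=
  forall z : nat -> R,
    (forall i, (i < m)%nat -> matvec n A z i = 0) ->
    forall j, (j < n)%nat -> z j = 0.

Definition pairs (m : nat) : list (nat * nat) :=
  filter (fun p => negb (Nat.eqb (fst p) (snd p))) (list_prod (seq 0 m) (seq 0 m)).

(* Delta = max_{j<>k} |<a_j,a_k>|,  delta = min_{j<>k} |<a_j,a_k>|
   (initial values 0 resp. 1 are harmless: all such values lie in [0,1)
   under the standing hypotheses and the list of pairs is nonempty). *)
Definition coh_max (m n : nat) (A : nat -> nat -> R) : R :=
  fold_right (fun p acc => Rmax (Rabs (dot n (row A (fst p)) (row A (snd p)))) acc)
    0 (pairs m).
Definition coh_min (m n : nat) (A : nat -> nat -> R) : R :=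
  fold_right (fun p acc => Rmin (Rabs (dot n (row A (fst p)) (row A (snd p)))) acc)
    1 (pairs m).

(* the set {M : M ||Az|| >= ||z|| for all z}; ||A^{-1}|| is its infimum *)
Definition inv_bound_set (m n : nat) (A : nat -> nat -> R) (M : R) : Prop :=
  forall z : nat -> R, M * norm2 m (matvec n A z) >= norm2 n z.

Definition is_infimum (E : R -> Prop) (l : R) : Prop :=
  (forall x, E x -> l <= x) /\ (forall c, (forall x, E x -> c <= x) -> c <= l).

Definition tsk_step (n : nat) (A : nat -> nat -> R) (b : nat -> R)
    (rs : nat * nat) (x : nat -> R) : nat -> R :=
  let r := fst rs in let s := snd rs in
  let ar := row A r in let as_ := row A s in
  let mu := dot n ar as_ in
  let y := fun j => x j + (b s - dot n x as_) * as_ j in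
  let v := fun j => (ar j - mu * as_ j) / sqrt (1 - mu ^ 2) in
  let beta := (b r - b s * mu) / sqrt (1 - mu ^ 2) in
  fun j => y j + (beta - dot n y v) * v j.

Fixpoint tsk_iter (n : nat) (A : nat -> nat -> R) (b : nat -> R)
    (x0 : nat -> R) (l : list (nat * nat)) : nat -> R :=
  match l with
  | nil => x0
  | p :: l' => tsk_iter n A b (tsk_step n A b p x0) l'
  end.

(* expectation of F over k i.i.d. uniform choices of ordered pairs of distinct
   indices in {0..m-1} (uniform over the (m^2-m)^k sequences) *)
Fixpoint expect_pairs (m k : nat) (F : list (nat * nat) -> R) : R :=
  match k with
  | O => F nil
  | S k' => / INR (m * m - m) *
      fold_right (fun p acc => expect_pairs m k' (fun l => F (p :: l)) + acc)
        0 (pairs m)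
  end.

From Stdlib Require Import Reals List Lra Lia Psatz Classical.
Open Scope R_scope.

(* Write e = x - y for the current error and P for the orthogonal projection onto
   span(a_r, a_s).  One step replaces e by (e - P e) - P w, so by Pythagoras
   |x - y'|^2 = |e|^2 - |P e|^2 + |P w|^2  ([tsk_step_error]).
   - Noiseless part: a scalar inequality per pair ([pair_energy_lower], using that
     D lower-bounds the coherence gain t^2(1-t)/(1+t) on [delta, Delta],
     [coherence_gain_interval]) and the lower frame bound
     sum_i <a_i,z>^2 >= |z|^2 / ||A^{-1}||^2 ([frame_bound]) give, averaged over
     the m^2 - m pairs, E|e - P e|^2 <= eta |e|^2  ([mean_proj_energy]).
   - Noise part: |P w| <= 3 |w|_oo / sqrt(1 - Delta^2)  ([pair_energy_noise]).
   Taking square roots (sqrt is subadditive and concave, [lsum_sqrt_le]) gives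
   E|x - y'| <= sqrt eta |x - y| + 3 |w|_oo / sqrt(1-Delta^2)  ([one_step_mean_error]);
   iterating over independent steps ([expected_error_iter]) and summing the
   geometric series ([geometric_sum_le]) yields the theorem. *)

Lemma rsum_ext n f g : (forall j, (j < n)%nat -> f j = g j) -> rsum n f = rsum n g.
Proof.
  induction n as [|n IH]; intros H; simpl; [reflexivity|].
  rewrite (IH (fun j Hj => H j ltac:(lia))), (H n ltac:(lia)). reflexivity.
Qed.

Lemma rsum_le n f g : (forall j, (j < n)%nat -> f j <= g j) -> rsum n f <= rsum n g.
Proof.
  induction n as [|n IH]; intros H; simpl; [lra|].
  specialize (IH (fun j Hj => H j ltac:(lia))). specialize (H n ltac:(lia)). lra.
Qed.

Lemma rsum_plus n f g : rsum n (fun j => f j + g j) = rsum n f + rsum n g.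
Proof. induction n; simpl; [ring | rewrite IHn; ring]. Qed.

Lemma rsum_minus n f g : rsum n (fun j => f j - g j) = rsum n f - rsum n g.
Proof. induction n; simpl; [ring | rewrite IHn; ring]. Qed.

Lemma rsum_scal n c f : rsum n (fun j => c * f j) = c * rsum n f.
Proof. induction n; simpl; [ring | rewrite IHn; ring]. Qed.

Lemma rsum_const n c : rsum n (fun _ => c) = INR n * c.
Proof. induction n; simpl rsum; [simpl; ring | rewrite IHn, S_INR; ring]. Qed.

Lemma rsum_swap m k F :
  rsum m (fun r => rsum k (fun s => F r s)) = rsum k (fun s => rsum m (fun r => F r s)).
Proof.
  induction m; simpl.
  - induction k; simpl; [ring | rewrite <- IHk; ring].
  - rewrite IHm, rsum_plus. reflexivity.
Qed.

(* The fold used by [expect_pairs]: an expectation over one step unfolds to an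
   [lsum] over [pairs m] divided by m^2 - m. *)
Definition lsum {T} (l : list T) (F : T -> R) : R := fold_right (fun p acc => F p + acc) 0 l.

Lemma lsum_le {T} (l : list T) F G :
  (forall p, In p l -> F p <= G p) -> lsum l F <= lsum l G.
Proof.
  induction l as [|a l IH]; intros H; simpl; [lra|].
  assert (H1 := H a (or_introl eq_refl)).
  assert (H2 : lsum l F <= lsum l G) by (apply IH; intros; apply H; right; auto).
  unfold lsum in *; lra.
Qed.

Lemma lsum_plus {T} (l : list T) F G : lsum l (fun p => F p + G p) = lsum l F + lsum l G.
Proof. induction l; unfold lsum in *; simpl; [ring | rewrite IHl; ring]. Qed.

Lemma lsum_minus {T} (l : list T) F G : lsum l (fun p => F p - G p) = lsum l F - lsum l G.
Proof. induction l; unfold lsum in *; simpl; [ring | rewrite IHl; ring]. Qed.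

Lemma lsum_scal {T} (l : list T) c F : lsum l (fun p => c * F p) = c * lsum l F.
Proof. induction l; unfold lsum in *; simpl; [ring | rewrite IHl; ring]. Qed.

Lemma lsum_const {T} (l : list T) c : lsum l (fun _ => c) = c * lsum l (fun _ => 1).
Proof. induction l; unfold lsum in *; simpl; [ring | rewrite IHl; ring]. Qed.

Lemma lsum_zero {T} (l : list T) : lsum l (fun _ => 0) = 0.
Proof. induction l; unfold lsum in *; simpl; lra. Qed.

Lemma lsum_term_le {T} (l : list T) t p : (forall p, In p l -> 0 <= t p) -> In p l ->
  t p <= lsum l t.
Proof.
  induction l as [|a l IH]; intros Ht Hp; [destruct Hp|].
  assert (Hl : 0 <= lsum l t).
  { rewrite <- (lsum_zero l). apply lsum_le. intros; apply Ht; right; auto. }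
  assert (Ha : 0 <= t a) by (apply Ht; left; auto).
  unfold lsum in *; simpl. destruct Hp as [<-|Hp]; [lra|].
  assert (t p <= fold_right (fun p acc => t p + acc) 0 l) by (apply IH; auto; intros; apply Ht; right; auto).
  lra.
Qed.

Lemma lsum_app {T} (l1 l2 : list T) F : lsum (l1 ++ l2) F = lsum l1 F + lsum l2 F.
Proof. induction l1; unfold lsum in *; simpl; [ring | rewrite IHl1; ring]. Qed.

Lemma lsum_map {T U} (l : list T) (h : T -> U) F : lsum (map h l) F = lsum l (fun p => F (h p)).
Proof. induction l; unfold lsum in *; simpl; [ring | rewrite IHl; ring]. Qed.

Lemma lsum_filter {T} (l : list T) f F :
  lsum (filter f l) F = lsum l (fun p => if f p then F p else 0).
Proof.
  induction l; unfold lsum in *; simpl; [ring|].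
  destruct (f a); simpl; rewrite IHl; ring.
Qed.

Lemma lsum_prod {T U} (l1 : list T) (l2 : list U) G :
  lsum (list_prod l1 l2) G = lsum l1 (fun a => lsum l2 (fun b => G (a, b))).
Proof.
  induction l1; [reflexivity|]. simpl. rewrite lsum_app, lsum_map, IHl1. reflexivity.
Qed.

Lemma lsum_seq m F : lsum (seq 0 m) F = rsum m F.
Proof.
  induction m; [reflexivity|].
  rewrite seq_S, lsum_app, IHm. unfold lsum; simpl. ring.
Qed.

Lemma rsum_skip k r G : (r < k)%nat ->
  rsum k (fun s => if negb (Nat.eqb r s) then G s else 0) = rsum k G - G r.
Proof.
  induction k; intros Hr; [lia|]. simpl.
  destruct (Nat.eq_dec r k) as [->|Hne].
  - rewrite Nat.eqb_refl. simpl.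
    rewrite (rsum_ext k _ G); [ring|].
    intros j Hj. destruct (Nat.eqb_spec k j); [lia | reflexivity].
  - destruct (Nat.eqb_spec r k); [contradiction|]. simpl.
    rewrite IHk by lia. ring.
Qed.

Lemma lsum_pairs m F :
  lsum (pairs m) F = rsum m (fun r => rsum m (fun s => F (r, s)) - F (r, r)).
Proof.
  unfold pairs. rewrite lsum_filter, lsum_prod, lsum_seq.
  apply rsum_ext. intros r Hr.
  rewrite lsum_seq. apply (rsum_skip m r (fun s => F (r, s))), Hr.
Qed.

Lemma In_pairs m p : In p (pairs m) -> (fst p < m)%nat /\ (snd p < m)%nat /\ fst p <> snd p.
Proof.
  unfold pairs. rewrite filter_In. destruct p as [r s]. simpl. rewrite in_prod_iff, !in_seq.
  intros [[H1 H2] H3]. apply Bool.negb_true_iff, Nat.eqb_neq in H3. lia.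
Qed.

Lemma lsum_pairs_one m : lsum (pairs m) (fun _ => 1) = INR (m * m - m).
Proof.
  rewrite lsum_pairs, (rsum_ext _ _ (fun _ => INR m - 1)) by (intros; rewrite rsum_const; ring).
  rewrite rsum_const. destruct m; [simpl; ring|].
  rewrite minus_INR by nia. rewrite mult_INR. ring.
Qed.

Lemma dot_sym n u v : dot n u v = dot n v u.
Proof. unfold dot; apply rsum_ext; intros; ring. Qed.

Lemma dot_ext n u u' v v' : (forall j, (j < n)%nat -> u j = u' j) ->
  (forall j, (j < n)%nat -> v j = v' j) -> dot n u v = dot n u' v'.
Proof. intros H1 H2; unfold dot; apply rsum_ext; intros; rewrite H1, H2; auto. Qed.

Lemma dot_ge0 n u : 0 <= dot n u u.
Proof. unfold dot; induction n; simpl; nra. Qed.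

Lemma dot_linr n c1 c2 u v w :
  dot n w (fun j => c1 * u j + c2 * v j) = c1 * dot n w u + c2 * dot n w v.
Proof. unfold dot; induction n; simpl; [ring | rewrite IHn; ring]. Qed.

Lemma dot_sq2 n c1 c2 u1 u2 :
  dot n (fun j => c1 * u1 j + c2 * u2 j) (fun j => c1 * u1 j + c2 * u2 j)
  = c1^2 * dot n u1 u1 + c2^2 * dot n u2 u2 + 2*c1*c2 * dot n u1 u2.
Proof. unfold dot; induction n; simpl; [ring | rewrite IHn; ring]. Qed.

Lemma dot_sq3 n c1 c2 c3 u1 u2 u3 :
  dot n (fun j => c1 * u1 j + c2 * u2 j + c3 * u3 j)
        (fun j => c1 * u1 j + c2 * u2 j + c3 * u3 j)
  = c1^2 * dot n u1 u1 + c2^2 * dot n u2 u2 + c3^2 * dot n u3 u3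
    + 2*c1*c2 * dot n u1 u2 + 2*c1*c3 * dot n u1 u3 + 2*c2*c3 * dot n u2 u3.
Proof. unfold dot; induction n; simpl; [ring | rewrite IHn; ring]. Qed.

Lemma unit_vector_dim n a : dot n a a = 1 -> (1 <= n)%nat.
Proof. destruct n; [unfold dot; simpl; lra | lia]. Qed.

Lemma norm2_sq n u : norm2 n u ^ 2 = dot n u u.
Proof. unfold norm2. rewrite pow2_sqrt; auto using dot_ge0. Qed.

Lemma dot_unit_sq_le n a e : dot n a a = 1 -> (dot n a e)^2 <= dot n e e.
Proof.
  intros Ha. assert (H := dot_ge0 n (fun j => 1 * e j + (- dot n a e) * a j)).
  rewrite dot_sq2, Ha, (dot_sym n e a) in H. lra.
Qed.

Lemma gram_schmidt_pair n ar as_ :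
  dot n ar ar = 1 -> dot n as_ as_ = 1 -> Rabs (dot n ar as_) < 1 ->
  let mu := dot n ar as_ in
  let v := fun j => (ar j - mu * as_ j) / sqrt (1 - mu ^ 2) in
  dot n v v = 1 /\ dot n as_ v = 0 /\
  forall z, dot n z v = (dot n ar z - mu * dot n as_ z) / sqrt (1 - mu ^ 2).
Proof.
  intros hr hs hmu mu v.
  assert (Hq : 0 < 1 - mu^2) by (apply Rabs_def2 in hmu; unfold mu; nra).
  set (sq := sqrt (1 - mu^2)) in *.
  assert (Hsq : sq * sq = 1 - mu^2) by (apply sqrt_sqrt; lra).
  assert (Hsp : 0 < sq) by (apply sqrt_lt_R0; lra).
  assert (Hv : forall z, dot n z v = dot n z (fun j => (1/sq) * ar j + (-mu/sq) * as_ j)).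
  { intro z. apply dot_ext; auto. intros j _. unfold v. field. lra. }
  assert (Hz : forall z, dot n z v = (dot n ar z - mu * dot n as_ z) / sq).
  { intro z. rewrite Hv, dot_linr, (dot_sym n z ar), (dot_sym n z as_). field. lra. }
  assert (Hs : dot n as_ v = 0).
  { rewrite Hz, hs. fold mu. field. lra. }
  assert (Hr : dot n ar v = sq).
  { rewrite Hz, hr, (dot_sym n as_ ar). fold mu.
    replace (1 - mu * mu) with (sq * sq) by (rewrite Hsq; ring). field. lra. }
  repeat split; [| exact Hs | exact Hz].
  rewrite Hz, Hr, Hs. field. lra.
Qed.

(* Squared length of the projection of a vector with coordinates [us] along a_s
   and [ur] along a_r onto span(a_r, a_s), when <a_r,a_s> = mu. *)
Definition pair_energy (mu ur us : R) : R := us ^ 2 + ((ur - mu * us) / sqrt (1 - mu ^ 2)) ^ 2.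

Lemma pair_energy_ge0 mu ur us : 0 <= pair_energy mu ur us.
Proof. apply Rplus_le_le_0_compat; apply pow2_ge_0. Qed.

Definition proj_energy n (A : nat -> nat -> R) (e : nat -> R) (p : nat * nat) : R :=
  pair_energy (dot n (row A (fst p)) (row A (snd p)))
              (dot n (row A (fst p)) e) (dot n (row A (snd p)) e).

(* Pythagoras for one step: with e = x - y and b = A x + w, the new error
   x - y' = (e - P e) - P w, where P is the orthogonal projection onto
   span(a_r, a_s); hence |x - y'|^2 = |e|^2 - |P e|^2 + |P w|^2. *)
Lemma tsk_step_error n A x w y r s :
  dot n (row A r) (row A r) = 1 -> dot n (row A s) (row A s) = 1 ->
  Rabs (dot n (row A r) (row A s)) < 1 ->
  let b := fun i => matvec n A x i + w i in
  let mu := dot n (row A r) (row A s) in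
  let e := vsub x y in
  let err := vsub x (tsk_step n A b (r, s) y) in
  dot n err err = dot n e e - proj_energy n A e (r, s) + pair_energy mu (w r) (w s).
Proof.
  intros hr hs hmu b mu e err.
  destruct (gram_schmidt_pair n (row A r) (row A s) hr hs hmu) as (Hvv & Hsv & Hzv).
  fold mu in Hvv, Hsv, Hzv.
  set (ar := row A r) in *. set (as_ := row A s) in *.
  set (sq := sqrt (1 - mu ^ 2)) in *.
  set (v := fun j => (ar j - mu * as_ j) / sq) in *.
  assert (He : forall z, dot n z e = dot n z x - dot n z y).
  { intro z. rewrite (dot_ext n z z e (fun j => 1 * x j + (-1) * y j)), dot_linr
      by (auto; intros j _; unfold e, vsub; ring). ring. }
  set (c := b s - dot n y as_).
  set (g := (b r - b s * mu) / sq - dot n (fun j => y j + c * as_ j) v).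
  assert (Hc : c = dot n as_ e + w s).
  { unfold c, b, matvec. fold as_. rewrite He, (dot_sym n y as_). ring. }
  assert (Hg : g = (dot n ar e - mu * dot n as_ e) / sq + (w r - mu * w s) / sq).
  { unfold g. rewrite dot_sym, (dot_ext n v v _ (fun j => 1 * y j + c * as_ j)), dot_linr
      by (auto; intros; ring).
    rewrite (dot_sym n v y), (dot_sym n v as_), Hsv, Hzv.
    unfold b, matvec. fold ar as_. rewrite !He. field.
    apply Rgt_not_eq, sqrt_lt_R0. apply Rabs_def2 in hmu. fold mu in hmu. nra. }
  unfold err, tsk_step. cbn [fst snd]. cbv zeta. fold ar as_ mu sq v c g.
  rewrite (dot_ext n _ (fun j => 1 * e j + (-c) * as_ j + (-g) * v j)
                   _ (fun j => 1 * e j + (-c) * as_ j + (-g) * v j))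
    by (intros j _; unfold e, v, vsub; ring).
  rewrite dot_sq3, Hvv, Hsv, hs, (dot_sym n e as_), Hzv, Hc, Hg.
  unfold proj_energy, pair_energy. cbn [fst snd]. fold ar as_ mu sq. ring.
Qed.

(* Bessel's inequality for span(a_r, a_s): the case w = 0 of [tsk_step_error]. *)
Lemma proj_energy_le n A x y r s :
  dot n (row A r) (row A r) = 1 -> dot n (row A s) (row A s) = 1 ->
  Rabs (dot n (row A r) (row A s)) < 1 ->
  proj_energy n A (vsub x y) (r, s) <= dot n (vsub x y) (vsub x y).
Proof.
  intros hr hs hmu.
  assert (H := tsk_step_error n A x (fun _ => 0) y r s hr hs hmu). cbv beta zeta in H.
  assert (H0 := dot_ge0 n (vsub x (tsk_step n A (fun i => matvec n A x i + 0) (r, s) y))).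
  replace (pair_energy (dot n (row A r) (row A s)) 0 0) with 0 in H
    by (unfold pair_energy, Rdiv; ring).
  lra.
Qed.

(* The coherence gain t^2 (1-t)/(1+t), whose minimum over the possible
   coherences |<a_r,a_s>| is the constant D of the theorem. *)
Definition coherence_gain (t : R) : R := t ^ 2 * (1 - t) / (1 + t).

Lemma coherence_gain_ge0 t : 0 <= t < 1 -> 0 <= coherence_gain t.
Proof.
  intros H. unfold coherence_gain, Rdiv.
  apply Rmult_le_pos; [apply Rmult_le_pos; [apply pow2_ge_0 | lra]|].
  left. apply Rinv_0_lt_compat. lra.
Qed.

(* [coherence_gain] is unimodal on [0,1), so on an interval it is minimal at an
   endpoint.  Writing g x - g y = (x - y) K(x,y) / ((1+x)(1+y)), the function
   K(t,.) is concave with K(t,0) >= 0, so it cannot be negative at dl and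
   positive at Dl >= dl. *)
Lemma coherence_gain_interval dl Dl t : 0 <= dl -> dl <= t -> t <= Dl -> Dl < 1 ->
  Rmin (coherence_gain dl) (coherence_gain Dl) <= coherence_gain t.
Proof.
  intros H0 H1 H2 H3.
  set (K := fun x y => x + y - x^2 - y^2 - x^2*y - x*y^2).
  assert (Hdiff : forall x y, 0 <= x -> 0 <= y ->
    (coherence_gain x - coherence_gain y) * ((1 + x) * (1 + y)) = (x - y) * K x y).
  { intros x y Hx Hy. unfold coherence_gain, K. field. lra. }
  assert (Hconc : Dl * K t dl = (Dl - dl) * K t 0 + dl * K t Dl + (1 + t) * dl * Dl * (Dl - dl))
    by (unfold K; ring).
  assert (HK0 : 0 <= K t 0) by (unfold K; nra).
  destruct (Rle_or_lt (coherence_gain dl) (coherence_gain t)) as [Hd|Hd].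
  { apply Rle_trans with (coherence_gain dl); [apply Rmin_l | exact Hd]. }
  apply Rle_trans with (coherence_gain Dl); [apply Rmin_r|].
  apply Rnot_lt_le. intros HD.
  assert (Kdl : (t - dl) * K t dl < 0).
  { rewrite <- Hdiff by lra. apply Rmult_neg_pos; [lra | apply Rmult_lt_0_compat; lra]. }
  assert (KDl : (t - Dl) * K t Dl < 0).
  { rewrite <- Hdiff by lra. apply Rmult_neg_pos; [lra | apply Rmult_lt_0_compat; lra]. }
  clearbody K. clear Hdiff.
  assert (Hlt : dl < t).
  { destruct (Rle_lt_or_eq_dec dl t H1) as [h | <-]; [exact h|].
    rewrite Rminus_diag, Rmult_0_l in Kdl. lra. }
  assert (K t dl < 0) by nra.
  assert (0 < K t Dl) by nra.
  assert (Dl * K t dl < 0) by (apply Rmult_pos_neg; lra).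
  assert (0 <= (Dl - dl) * K t 0) by (apply Rmult_le_pos; lra).
  assert (0 <= dl * K t Dl) by (apply Rmult_le_pos; lra).
  assert (0 <= (1 + t) * dl * Dl * (Dl - dl)) by (repeat apply Rmult_le_pos; lra).
  lra.
Qed.

(* The key per-pair inequality: projecting onto span(a_r,a_s) (in either order)
   removes at least half of the two squared coordinates along the two single rows,
   plus the extra fraction D/2, as soon as D <= coherence_gain |mu|. *)
Lemma pair_energy_lower a b u D : Rabs u < 1 -> D <= coherence_gain (Rabs u) ->
  pair_energy u b a >=
  (a^2 + (b - u*a)^2 + b^2 + (a - u*b)^2)/2 + D * (a^2 + b^2)/2.
Proof.
  intros Hu HD. unfold coherence_gain in HD.
  assert (Hab : 2*u*a*b <= Rabs u*(a^2+b^2)).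
  { destruct (Rcase_abs u) as [Hn|Hn].
    - rewrite Rabs_left by lra.
      assert (0 <= -u * (a+b)^2) by (apply Rmult_le_pos; [lra | apply pow2_ge_0]). nra.
    - rewrite Rabs_right by lra.
      assert (0 <= u * (a-b)^2) by (apply Rmult_le_pos; [lra | apply pow2_ge_0]). nra. }
  assert (Hut : u^2 = Rabs u^2) by (rewrite pow2_abs; ring).
  set (t := Rabs u) in *.
  assert (Ht0 : 0 <= t) by apply Rabs_pos.
  clearbody t.
  assert (Hq : 0 < 1 - u^2) by nra.
  assert (Hsq : sqrt (1 - u^2) ^ 2 = 1 - u^2) by (apply pow2_sqrt; lra).
  assert (HE : pair_energy u b a - (a^2 + (b - u*a)^2 + b^2 + (a - u*b)^2)/2
     = u^2/(1-u^2) * (((b-u*a)^2 + (a-u*b)^2)/2)).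
  { unfold pair_energy. unfold Rdiv at 1. rewrite Rpow_mult_distr, pow_inv, Hsq. field. lra. }
  assert (Hs : ((b-u*a)^2 + (a-u*b)^2)/2 >= (1-t)^2*(a^2+b^2)/2) by nra.
  assert (Hc : u^2/(1-u^2) * (1-t)^2 = t^2*(1-t)/(1+t)).
  { rewrite Hut. rewrite Hut in Hq. field. split; nra. }
  assert (Hw : 0 <= u^2/(1-u^2)) by (apply Rmult_le_pos; [nra | left; apply Rinv_0_lt_compat; lra]).
  assert (u^2/(1-u^2) * (((b-u*a)^2 + (a-u*b)^2)/2) >= t^2*(1-t)/(1+t) * ((a^2+b^2)/2)).
  { rewrite <- Hc, Rmult_assoc. apply Rle_ge, Rmult_le_compat_l; lra. }
  assert (D * ((a^2+b^2)/2) <= t^2*(1-t)/(1+t) * ((a^2+b^2)/2)) by (apply Rmult_le_compat_r; nra).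
  lra.
Qed.

Lemma sqrt_le_of_sq a c : 0 <= c -> a <= c ^ 2 -> sqrt a <= c.
Proof. intros Hc Ha. rewrite <- (sqrt_pow2 c Hc). apply sqrt_le_1_alt, Ha. Qed.

Lemma pair_energy_noise mu wr ws W Dl : Rabs ws <= W -> Rabs wr <= W -> Rabs mu <= Dl -> Dl < 1 ->
  sqrt (pair_energy mu wr ws) <= 3 * (W / sqrt (1 - Dl ^ 2)).
Proof.
  intros Hs Hr Hmu HDl.
  assert (Ht0 := Rabs_pos mu).
  assert (Hmu2 : mu^2 = Rabs mu ^ 2) by (rewrite pow2_abs; ring).
  assert (HW : 0 <= W) by (eapply Rle_trans; [apply Rabs_pos | exact Hs]).
  assert (Hws : ws^2 <= W^2) by (rewrite <- pow2_abs; apply pow_incr; split; [apply Rabs_pos | assumption]).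
  assert (Hwr : wr^2 <= W^2) by (rewrite <- pow2_abs; apply pow_incr; split; [apply Rabs_pos | assumption]).
  assert (Hcross : - (2*mu*wr*ws) <= Rabs mu * (ws^2 + wr^2)).
  { destruct (Rcase_abs mu) as [Hn|Hn].
    - rewrite Rabs_left by lra.
      assert (0 <= -mu * (wr-ws)^2) by (apply Rmult_le_pos; [lra | apply pow2_ge_0]). nra.
    - rewrite Rabs_right by lra.
      assert (0 <= mu * (wr+ws)^2) by (apply Rmult_le_pos; [lra | apply pow2_ge_0]). nra. }
  set (t := Rabs mu) in *. clearbody t.
  assert (Hq : 0 < 1 - mu^2) by nra.
  assert (HqD : 0 < 1 - Dl^2) by nra.
  set (p := pair_energy mu wr ws).
  assert (Hp0 : 0 <= p) by apply pair_energy_ge0.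
  assert (Hp : p * (1 - mu^2) = ws^2 + wr^2 - 2*mu*wr*ws).
  { unfold p, pair_energy. unfold Rdiv. rewrite Rpow_mult_distr, pow_inv, pow2_sqrt by lra.
    field. lra. }
  (* p (1-t)(1+t) <= 2 W^2 (1+t), hence p (1 - Dl^2) <= 2 p (1-t) <= 4 W^2 *)
  assert (Hnum : ws^2 + wr^2 - 2*mu*wr*ws <= 2 * W^2 * (1 + t)).
  { assert (0 <= t * (W^2 - ws^2)) by (apply Rmult_le_pos; lra).
    assert (0 <= t * (W^2 - wr^2)) by (apply Rmult_le_pos; lra). lra. }
  assert (Hp1 : (p * (1 - t) - 2 * W^2) * (1 + t) <= 0).
  { replace ((p * (1 - t) - 2 * W^2) * (1 + t)) with (p * (1 - mu^2) - 2 * W^2 * (1 + t))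
      by (rewrite Hmu2; ring). lra. }
  assert (Hp2 : p * (1 - t) <= 2 * W^2).
  { apply Rnot_lt_le. intros h. assert (0 < (p * (1 - t) - 2 * W^2) * (1 + t)); [|lra].
    apply Rmult_lt_0_compat; lra. }
  assert (Hp3 : p * (1 - Dl^2) <= 9 * W^2).
  { assert (0 <= p * (2 * (1 - t) - (1 - Dl^2))) by (apply Rmult_le_pos; nra). nra. }
  apply sqrt_le_of_sq.
  - apply Rmult_le_pos; [lra|]. apply Rmult_le_pos; [lra|].
    left. apply Rinv_0_lt_compat, sqrt_lt_R0. lra.
  - unfold Rdiv. rewrite Rpow_mult_distr, Rpow_mult_distr, pow_inv, pow2_sqrt by lra.
    apply Rmult_le_reg_r with (1 - Dl^2); [lra|].
    replace (3 ^ 2 * (W ^ 2 * / (1 - Dl ^ 2)) * (1 - Dl ^ 2)) with (9 * W^2) by (field; lra).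
    exact Hp3.
Qed.

(* Used with x = eta, which may be negative (then sqrt eta = 0). *)
Lemma le_sqrt_sq x : x <= sqrt x ^ 2.
Proof.
  destruct (Rle_or_lt 0 x) as [H|H].
  - rewrite pow2_sqrt by exact H. lra.
  - rewrite sqrt_neg_0 by lra. lra.
Qed.

Lemma sqrt_add_le a b : 0 <= a -> 0 <= b -> sqrt (a + b) <= sqrt a + sqrt b.
Proof.
  intros Ha Hb. pose proof (sqrt_pos a). pose proof (sqrt_pos b).
  apply sqrt_le_of_sq; [lra|].
  replace ((sqrt a + sqrt b) ^ 2) with (sqrt a ^ 2 + sqrt b ^ 2 + 2 * sqrt a * sqrt b) by ring.
  rewrite !pow2_sqrt by assumption. nra.
Qed.

Lemma sqrt_le_amgm a c : 0 <= a -> 0 < c -> sqrt a <= (a / c + c) / 2.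
Proof.
  intros Ha Hc. rewrite <- (sqrt_sqrt a Ha) at 2. set (y := sqrt a).
  apply Rmult_le_reg_r with (2 * c); [lra|].
  replace ((y * y / c + c) / 2 * (2 * c)) with (y * y + c * c) by (field; lra).
  assert (0 <= (y - c) * (y - c)) by apply Rle_0_sqr. lra.
Qed.

Lemma lsum_sqrt_le {T} (l : list T) t N s : lsum l (fun _ => 1) = N ->
  (forall p, In p l -> 0 <= t p) -> 0 <= s -> lsum l t <= N * s ^ 2 ->
  lsum l (fun p => sqrt (t p)) <= N * s.
Proof.
  intros HN Ht Hs Hsum.
  destruct (Rle_lt_or_eq_dec 0 s Hs) as [Hs'|<-].
  - apply Rle_trans with (lsum l (fun p => / (2 * s) * t p + s / 2 * 1)).
    + apply lsum_le. intros p Hp.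
      apply Rle_trans with ((t p / s + s) / 2); [apply sqrt_le_amgm; auto|].
      right. field. lra.
    + rewrite lsum_plus, !lsum_scal, HN.
      apply Rmult_le_reg_l with (2 * s); [lra|].
      replace (2 * s * (/ (2 * s) * lsum l t + s / 2 * N)) with (lsum l t + N * s ^ 2)
        by (field; lra). nra.
  - (* s = 0: every t p vanishes *)
    rewrite Rmult_0_r, <- (lsum_zero l). apply lsum_le. intros p Hp.
    assert (t p <= 0) by (eapply Rle_trans; [apply lsum_term_le; eauto | lra]).
    rewrite sqrt_neg_0 by lra. lra.
Qed.

Lemma linf_ge m w i : (i < m)%nat -> Rabs (w i) <= linf m w.
Proof.
  induction m; intros Hi; [lia|]. simpl.
  destruct (Nat.eq_dec i m) as [->|Hne]; [apply Rmax_r|].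
  eapply Rle_trans; [apply IHm; lia | apply Rmax_l].
Qed.

Lemma linf_ge0 m w : 0 <= linf m w.
Proof. induction m; simpl; [lra|]. eapply Rle_trans; [apply IHm | apply Rmax_l]. Qed.

(* The scalar core of the contraction estimate: the bound below is affine in
   Q = sum_i <a_i,e>^2, and holds at both ends of the range M q E <= Q <= M E. *)
Lemma contraction_affine M q D E Q :
  2 <= M -> 0 < q <= 1 -> 0 <= D -> 0 <= E -> M * q * E <= Q <= M * E ->
  (M * M - M) * E - (((1 + D) * (M - 1) - M * q) * Q + M * M * q * E)
  <= (M * M - M) * (1 - (2 * q - q ^ 2 + D * q)) * E.
Proof.
  intros HM Hq HD HE HQ.
  destruct (Rle_or_lt 0 ((1 + D) * (M - 1) - M * q)) as [Hc|Hc].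
  - assert (0 <= (Q - M * q * E) * ((1 + D) * (M - 1) - M * q)) by (apply Rmult_le_pos; lra).
    assert (0 <= q * E * M * (1 - q)) by (repeat apply Rmult_le_pos; lra).
    nra.
  - assert (0 <= (M * E - Q) * (-((1 + D) * (M - 1) - M * q))) by (apply Rmult_le_pos; lra).
    assert (0 <= (M * M - M) * E * ((1 - q) * (1 - q))) by (repeat apply Rmult_le_pos; nra).
    assert (0 <= (M * M - M) * E * D * (1 - q)) by (repeat apply Rmult_le_pos; nra).
    nra.
Qed.

Section MeanError.

Variables (m n : nat) (A : nat -> nat -> R) (q D : R).
Hypothesis unit_rows : forall i, (i < m)%nat -> dot n (row A i) (row A i) = 1.
(* lower frame bound: the smallest eigenvalue of A^T A is at least m q *)
Hypothesis frame : forall z, rsum m (fun i => (dot n (row A i) z) ^ 2) >= INR m * q * dot n z z.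
Hypothesis q_range : 0 < q <= 1.
Hypothesis D_ge0 : 0 <= D.
Hypothesis two_rows : (2 <= m)%nat.
Hypothesis pair_coherence : forall p, In p (pairs m) ->
  Rabs (dot n (row A (fst p)) (row A (snd p))) < 1 /\
  D <= coherence_gain (Rabs (dot n (row A (fst p)) (row A (snd p)))).

Lemma frame_residual e t : (t < m)%nat ->
  rsum m (fun i => (dot n (row A i) e - dot n (row A i) (row A t) * dot n (row A t) e) ^ 2)
  >= INR m * q * (dot n e e - (dot n (row A t) e) ^ 2).
Proof.
  intros Ht.
  set (c := dot n (row A t) e).
  assert (Hk := frame (fun j => 1 * e j + (- c) * row A t j)).
  rewrite dot_sq2, (unit_rows t Ht), (dot_sym n e (row A t)) in Hk. fold c in Hk.
  replace (1 ^ 2 * dot n e e + (- c) ^ 2 * 1 + 2 * 1 * - c * c) with (dot n e e - c ^ 2)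
    in Hk by ring.
  rewrite (rsum_ext m _ (fun i => (dot n (row A i) (fun j => 1 * e j + (- c) * row A t j)) ^ 2));
    [exact Hk|].
  intros i Hi. rewrite dot_linr. ring.
Qed.

Lemma double_residual e :
  rsum m (fun r => rsum m (fun s =>
    (dot n (row A r) e - dot n (row A r) (row A s) * dot n (row A s) e) ^ 2))
  >= INR m * q * (INR m * dot n e e - rsum m (fun i => (dot n (row A i) e) ^ 2)).
Proof.
  rewrite rsum_swap. apply Rle_ge.
  apply Rle_trans with (rsum m (fun s => INR m * q * (dot n e e - (dot n (row A s) e) ^ 2))).
  - right. rewrite rsum_scal, rsum_minus, rsum_const. reflexivity.
  - apply rsum_le. intros s Hs. apply Rge_le, frame_residual, Hs.
Qed.

(* Summing the per-pair bound L(r,s) <= |P e|^2 over r <> s gives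
   (1+D)(M-1) Q + X with X >= M q (M |e|^2 - Q) ([double_residual]). *)
Lemma mean_proj_energy e :
  lsum (pairs m) (fun p => dot n e e - proj_energy n A e p)
  <= INR (m * m - m) * (1 - (2 * q - q ^ 2 + D * q)) * dot n e e.
Proof.
  set (E := dot n e e).
  set (al := fun i => dot n (row A i) e).
  set (mu := fun r s => dot n (row A r) (row A s)).
  set (Q := rsum m (fun i => al i ^ 2)).
  set (M := INR m).
  set (X := rsum m (fun r => rsum m (fun s => (al r - mu r s * al s) ^ 2))).
  (* the symmetric per-pair lower bound of [pair_energy_lower] *)
  set (L := fun r s => (1 + D) / 2 * al s ^ 2 + 1 / 2 * (al r - mu r s * al s) ^ 2
                     + (1 + D) / 2 * al r ^ 2 + 1 / 2 * (al s - mu r s * al r) ^ 2).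
  assert (HL : lsum (pairs m) (fun p => E - proj_energy n A e p)
               <= lsum (pairs m) (fun p => E - L (fst p) (snd p))).
  { apply lsum_le. intros [r s] Hp. destruct (pair_coherence _ Hp) as [H1 H2].
    assert (H := pair_energy_lower (al s) (al r) (mu r s) D H1 H2).
    unfold proj_energy, L. cbn [fst snd]. fold (al r) (al s) (mu r s). lra. }
  assert (HX : X >= M * q * (M * E - Q)) by apply double_residual.
  assert (HY : rsum m (fun r => rsum m (fun s => (al s - mu r s * al r) ^ 2)) = X).
  { rewrite rsum_swap. apply rsum_ext; intros r _. apply rsum_ext; intros s _.
    unfold mu. rewrite dot_sym. reflexivity. }
  assert (Hpairs : lsum (pairs m) (fun p => L (fst p) (snd p)) = (1 + D) * (M - 1) * Q + X).
  { rewrite lsum_pairs. cbn [fst snd]. unfold L.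
    rewrite (rsum_ext m _ (fun r => (1 + D) / 2 * Q + 1 / 2 * rsum m (fun s => (al r - mu r s * al s) ^ 2)
        + ((1 + D) / 2 * M - (1 + D)) * al r ^ 2 + 1 / 2 * rsum m (fun s => (al s - mu r s * al r) ^ 2))).
    - rewrite !rsum_plus, !rsum_scal, rsum_const, HY. fold Q X M. field.
    - intros r Hr. rewrite !rsum_plus, !rsum_scal, rsum_const. fold Q M.
      unfold mu. rewrite (unit_rows r Hr). field. }
  assert (HN : INR (m * m - m) = M * M - M) by (unfold M; rewrite minus_INR, mult_INR by nia; ring).
  assert (HQ1 : M * q * E <= Q) by (apply Rge_le, frame).
  assert (HQ2 : Q <= M * E).
  { unfold Q, M. rewrite <- rsum_const. apply rsum_le. intros i Hi.
    apply dot_unit_sq_le, unit_rows, Hi. }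
  assert (HM : 2 <= M) by (unfold M; apply (le_INR 2), two_rows).
  eapply Rle_trans; [exact HL|].
  rewrite lsum_minus, lsum_const, lsum_pairs_one, Hpairs, HN. fold E.
  assert (H := contraction_affine M q D E Q HM q_range D_ge0 (dot_ge0 n e) (conj HQ1 HQ2)).
  lra.
Qed.

Variables (Dl : R) (x w : nat -> R).
Hypothesis max_coherence : forall p, In p (pairs m) ->
  Rabs (dot n (row A (fst p)) (row A (snd p))) <= Dl.
Hypothesis Dl_lt1 : Dl < 1.

Lemma one_step_mean_error y :
  let b := fun i => matvec n A x i + w i in
  lsum (pairs m) (fun p => norm2 n (vsub x (tsk_step n A b p y)))
  <= INR (m * m - m) * (sqrt (1 - (2 * q - q ^ 2 + D * q)) * norm2 n (vsub x y)
                        + 3 * (linf m w / sqrt (1 - Dl ^ 2))).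
Proof.
  intros b.
  set (eta := 1 - (2 * q - q ^ 2 + D * q)).
  set (e := vsub x y).
  set (C := 3 * (linf m w / sqrt (1 - Dl ^ 2))).
  set (N := INR (m * m - m)).
  set (T := fun p => dot n e e - proj_energy n A e p).
  assert (HT0 : forall p, In p (pairs m) -> 0 <= T p).
  { intros [r s] Hp. destruct (In_pairs _ _ Hp) as (Hr & Hs & Hrs).
    unfold T, e. cbn [fst snd] in *.
    assert (H := proj_energy_le n A x y r s (unit_rows r Hr) (unit_rows s Hs)
                   (proj1 (pair_coherence _ Hp))). lra. }
  (* each step: error <= sqrt (noiseless squared error) + noise *)
  apply Rle_trans with (lsum (pairs m) (fun p => 1 * sqrt (T p) + C * 1)).
  { apply lsum_le. intros [r s] Hp. destruct (In_pairs _ _ Hp) as (Hr & Hs & Hrs).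
    cbn [fst snd] in *.
    assert (Hmu := proj1 (pair_coherence _ Hp)). cbn [fst snd] in Hmu.
    assert (Hstep := tsk_step_error n A x w y r s (unit_rows r Hr) (unit_rows s Hs) Hmu).
    cbv zeta in Hstep. fold b e in Hstep.
    unfold norm2. rewrite Hstep. fold (T (r, s)).
    eapply Rle_trans; [apply sqrt_add_le; [apply HT0, Hp | apply pair_energy_ge0]|].
    rewrite Rmult_1_l, Rmult_1_r. apply Rplus_le_compat_l.
    apply pair_energy_noise; [apply linf_ge; auto | apply linf_ge; auto | | exact Dl_lt1].
    exact (max_coherence _ Hp). }
  rewrite lsum_plus, !lsum_scal, lsum_pairs_one. fold N.
  (* Jensen, fed with the contraction of the mean squared noiseless error *)
  assert (HJ : lsum (pairs m) (fun p => sqrt (T p)) <= N * (sqrt eta * norm2 n e)).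
  { apply lsum_sqrt_le; [apply lsum_pairs_one | exact HT0 |
                         apply Rmult_le_pos; apply sqrt_pos |].
    assert (Hc := mean_proj_energy e).
    fold eta N T in Hc.
    assert (HN : 0 <= N) by apply pos_INR.
    assert (0 <= N * dot n e e) by (apply Rmult_le_pos; [exact HN | apply dot_ge0]).
    rewrite Rpow_mult_distr, norm2_sq.
    assert (Heta := le_sqrt_sq eta). nra. }
  lra.
Qed.

End MeanError.

Lemma expected_error_iter m n A b (err : (nat -> R) -> R) rho C :
  (2 <= m)%nat -> 0 <= rho ->
  (forall y, lsum (pairs m) (fun p => err (tsk_step n A b p y))
             <= INR (m * m - m) * (rho * err y + C)) ->
  forall k y, expect_pairs m k (fun l => err (tsk_iter n A b y l))
              <= rho ^ k * err y + C * rsum k (fun i => rho ^ i).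
Proof.
  intros Hm Hrho Hstep k. induction k as [|k IH]; intro y.
  - simpl. lra.
  - change (expect_pairs m (S k) (fun l => err (tsk_iter n A b y l)))
      with (/ INR (m * m - m) * lsum (pairs m)
              (fun p => expect_pairs m k (fun l => err (tsk_iter n A b (tsk_step n A b p y) l)))).
    assert (HN : 0 < INR (m * m - m)) by (apply lt_0_INR; nia).
    assert (Hk : 0 <= rho ^ k) by (apply pow_le, Hrho).
    apply Rmult_le_reg_l with (INR (m * m - m)); [exact HN|].
    rewrite <- Rmult_assoc, Rinv_r, Rmult_1_l by lra.
    apply Rle_trans with (lsum (pairs m)
      (fun p => rho ^ k * err (tsk_step n A b p y) + C * rsum k (fun i => rho ^ i) * 1)).
    { apply lsum_le. intros p _. rewrite Rmult_1_r. apply IH. }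
    rewrite lsum_plus, !lsum_scal, lsum_pairs_one.
    assert (H := Rmult_le_compat_l _ _ _ Hk (Hstep y)).
    simpl rsum. simpl pow. nra.
Qed.

Lemma geometric_sum_le k t : 0 <= t < 1 -> rsum k (fun i => t ^ i) <= 1 / (1 - t).
Proof.
  intros Ht.
  assert (Hg : rsum k (fun i => t ^ i) * (1 - t) = 1 - t ^ k).
  { induction k; simpl; [ring|]. rewrite Rmult_plus_distr_r, IHk. ring. }
  assert (0 <= t ^ k) by (apply pow_le; lra).
  apply Rmult_le_reg_r with (1 - t); [lra|]. rewrite Hg.
  replace (1 / (1 - t) * (1 - t)) with 1 by (field; lra). lra.
Qed.

Lemma rate_range q D : 0 < q <= 1 -> 0 <= D -> 0 <= sqrt (1 - (2 * q - q ^ 2 + D * q)) < 1.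
Proof.
  intros Hq HD. split; [apply sqrt_pos|].
  assert (0 < q * (2 - q + D)) by (apply Rmult_lt_0_compat; lra).
  destruct (Rle_or_lt 0 (1 - (2 * q - q ^ 2 + D * q))).
  - apply Rlt_le_trans with (sqrt 1); [apply sqrt_lt_1_alt; split; nra | rewrite sqrt_1; lra].
  - rewrite sqrt_neg_0; lra.
Qed.

(* The infimum ||A^{-1}|| of the bounds M with M ||A z|| >= ||z|| is itself such
   a bound (the bounds form a closed up-set). *)
Lemma infimum_is_bound m n A Ainv : is_infimum (inv_bound_set m n A) Ainv ->
  forall z, Ainv * norm2 m (matvec n A z) >= norm2 n z.
Proof.
  intros [_ Hgreat] z.
  destruct (classic (exists M, inv_bound_set m n A M)) as [[M0 HM0]|Hne].
  2: { assert (Ainv + 1 <= Ainv); [|lra].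
       apply Hgreat. intros M HM. exfalso. apply Hne. eauto. }
  set (a := norm2 m (matvec n A z)). set (c := norm2 n z).
  assert (Ha : 0 <= a) by apply sqrt_pos.
  destruct (Rge_or_gt (Ainv * a) c) as [h|h]; [exact h|]. exfalso.
  destruct (Req_dec a 0) as [Ha0|Ha0].
  - specialize (HM0 z). fold a c in HM0. rewrite Ha0 in *. lra.
  - (* c / a is a lower bound of the set, hence at most Ainv *)
    assert (Hca : c / a <= Ainv).
    { apply Hgreat. intros M HM. specialize (HM z). fold a c in HM.
      apply Rmult_le_reg_r with a; [lra|]. unfold Rdiv. rewrite Rmult_assoc, Rinv_l by lra. lra. }
    apply Rmult_le_compat_r with (r := a) in Hca; [|lra].
    unfold Rdiv in Hca. rewrite Rmult_assoc, Rinv_l, Rmult_1_r in Hca by lra. lra.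
Qed.

(* With unit rows, ||A||_F^2 = m, and the smallest eigenvalue of A^T A is at
   least 1/||A^{-1}||^2 = m q with q = 1/R; moreover q <= 1. *)
Lemma frame_bound m n A Ainv : (1 <= m)%nat ->
  (forall i, (i < m)%nat -> dot n (row A i) (row A i) = 1) ->
  is_infimum (inv_bound_set m n A) Ainv ->
  let q := 1 / (frob2 m n A * Ainv ^ 2) in
  (0 < q <= 1) /\
  forall z, rsum m (fun i => (dot n (row A i) z) ^ 2) >= INR m * q * dot n z z.
Proof.
  intros Hm Hu Hinf q.
  assert (Hb := infimum_is_bound m n A Ainv Hinf).
  assert (HM : 1 <= INR m) by (apply (le_INR 1), Hm).
  assert (Hfrob : frob2 m n A = INR m).
  { unfold frob2. rewrite <- (Rmult_1_r (INR m)), <- rsum_const. apply rsum_ext, Hu. }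
  assert (Hsq : forall z, norm2 m (matvec n A z) ^ 2 = rsum m (fun i => (dot n (row A i) z) ^ 2)).
  { intro z. rewrite norm2_sq. apply rsum_ext. intros; unfold matvec; ring. }
  (* a unit row z = a_0 forces Ainv > 0 *)
  assert (HA0 : 0 < Ainv).
  { assert (H := Hb (row A 0%nat)).
    unfold norm2 at 2 in H. rewrite (Hu 0%nat Hm), sqrt_1 in H.
    pose proof (sqrt_pos (dot m (matvec n A (row A 0%nat)) (matvec n A (row A 0%nat)))).
    unfold norm2 in H. nra. }
  assert (Hq : q = / (INR m * Ainv ^ 2)) by (unfold q; rewrite Hfrob; field; nra).
  assert (Hframe : forall z, rsum m (fun i => (dot n (row A i) z) ^ 2) >= INR m * q * dot n z z).
  { intro z. rewrite <- Hsq, <- norm2_sq, Hq.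
    assert (H := Hb z). pose proof (sqrt_pos (dot n z z)). fold (norm2 n z) in *.
    pose proof (sqrt_pos (dot m (matvec n A z) (matvec n A z))). fold (norm2 m (matvec n A z)) in *.
    replace (INR m * / (INR m * Ainv ^ 2) * norm2 n z ^ 2) with ((norm2 n z / Ainv) ^ 2)
      by (field; lra).
    apply Rle_ge, pow_incr. split.
    - apply Rmult_le_pos; [assumption | left; apply Rinv_0_lt_compat, HA0].
    - apply Rmult_le_reg_r with Ainv; [exact HA0|].
      unfold Rdiv. rewrite Rmult_assoc, Rinv_l by lra. lra. }
  split; [|exact Hframe]. split.
  - rewrite Hq. apply Rinv_0_lt_compat, Rmult_lt_0_compat; [lra | apply pow_lt, HA0].
  - (* test the frame bound on the unit vector a_0 *)
    assert (H := Hframe (row A 0%nat)). rewrite (Hu 0%nat Hm) in H.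
    assert (rsum m (fun i => (dot n (row A i) (row A 0%nat)) ^ 2) <= INR m * 1).
    { rewrite <- rsum_const. apply rsum_le. intros i Hi.
      rewrite <- (Hu 0%nat Hm). apply dot_unit_sq_le, Hu, Hi. }
    nra.
Qed.

Lemma fold_Rmax_ge {T} (l : list T) g p : In p l ->
  g p <= fold_right (fun p acc => Rmax (g p) acc) 0 l.
Proof.
  induction l as [|a l IH]; simpl; [tauto|]. intros [->|H].
  - apply Rmax_l.
  - eapply Rle_trans; [apply IH, H | apply Rmax_r].
Qed.

Lemma fold_Rmax_range {T} (l : list T) g : (forall p, In p l -> g p < 1) ->
  0 <= fold_right (fun p acc => Rmax (g p) acc) 0 l < 1.
Proof.
  induction l as [|a l IH]; simpl; intros H; [lra|].
  destruct IH as [IH1 IH2]; [intros; apply H; auto|].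
  assert (g a < 1) by (apply H; auto).
  split; [eapply Rle_trans; [apply IH1 | apply Rmax_r] | apply Rmax_lub_lt; auto].
Qed.

Lemma fold_Rmin_le {T} (l : list T) g p : In p l ->
  fold_right (fun p acc => Rmin (g p) acc) 1 l <= g p.
Proof.
  induction l as [|a l IH]; simpl; [tauto|]. intros [->|H].
  - apply Rmin_l.
  - eapply Rle_trans; [apply Rmin_r | apply IH, H].
Qed.

Lemma fold_Rmin_ge0 {T} (l : list T) g : (forall p, 0 <= g p) ->
  0 <= fold_right (fun p acc => Rmin (g p) acc) 1 l.
Proof. induction l; simpl; intros H; [lra | apply Rmin_glb; auto]. Qed.

Lemma coherence_bounds m n A : (2 <= m)%nat -> no_parallel_rows m n A ->
  let Dl := coh_max m n A in
  let D := Rmin (coherence_gain (coh_min m n A)) (coherence_gain Dl) in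
  0 <= Dl < 1 /\ 0 <= D /\
  forall p, In p (pairs m) ->
    Rabs (dot n (row A (fst p)) (row A (snd p))) <= Dl /\
    Rabs (dot n (row A (fst p)) (row A (snd p))) < 1 /\
    D <= coherence_gain (Rabs (dot n (row A (fst p)) (row A (snd p)))).
Proof.
  intros Hm Hpar Dl D.
  set (g := fun p : nat * nat => Rabs (dot n (row A (fst p)) (row A (snd p)))).
  assert (Hlt : forall p, In p (pairs m) -> g p < 1).
  { intros p Hp. destruct (In_pairs m p Hp) as (H1 & H2 & H3). apply Hpar; auto. }
  assert (HDl : 0 <= Dl < 1) by exact (fold_Rmax_range (pairs m) g Hlt).
  assert (Hdl : 0 <= coh_min m n A) by (apply (fold_Rmin_ge0 (pairs m) g); intros; apply Rabs_pos).
  assert (Hin : forall p, In p (pairs m) -> coh_min m n A <= g p <= Dl)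
    by (intros; split; [apply (fold_Rmin_le (pairs m) g) | apply (fold_Rmax_ge (pairs m) g)]; auto).
  (* (1,0) is a pair, so delta <= Delta *)
  assert (H10 : In (1%nat, 0%nat) (pairs m)).
  { unfold pairs. apply filter_In. split; [apply in_prod; apply in_seq; lia | reflexivity]. }
  specialize (Hin _ H10) as Hdd.
  repeat split; try lra.
  - apply Rmin_glb; apply coherence_gain_ge0; lra.
  - apply Hin, H.
  - apply Hlt, H.
  - apply coherence_gain_interval; try apply Hin; auto; lra.
Qed.

Theorem theorem4 (m n : nat) (A : nat -> nat -> R)
  (hmn : (n < m)%nat)
  (hrank : full_rank m n A)
  (hstd : standardized m n A)
  (hpar : no_parallel_rows m n A)
  (x w x0 : nat -> R) (Ainv : R)
  (hAinv : is_infimum (inv_bound_set m n A) Ainv) :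
  let b := fun i => matvec n A x i + w i in
  let Rc := frob2 m n A * Ainv ^ 2 in
  let Dl := coh_max m n A in
  let dl := coh_min m n A in
  let D := Rmin (dl ^ 2 * (1 - dl) / (1 + dl)) (Dl ^ 2 * (1 - Dl) / (1 + Dl)) in
  let eta := (1 - 1 / Rc) ^ 2 - D / Rc in
  forall k : nat,
    expect_pairs m k (fun l => norm2 n (vsub x (tsk_iter n A b x0 l)))
    <= sqrt eta ^ k * norm2 n (vsub x x0)
       + 3 / (1 - sqrt eta) * (linf m w / sqrt (1 - Dl ^ 2)).
Proof.
  intros b Rc Dl dl D eta k.
  assert (Hu : forall i, (i < m)%nat -> dot n (row A i) (row A i) = 1).
  { intros i Hi. rewrite <- norm2_sq, (hstd i Hi). ring. }
  assert (Hm : (2 <= m)%nat) by (pose proof (unit_vector_dim n (row A 0%nat) (Hu 0%nat ltac:(lia))); lia).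
  set (q := 1 / Rc) in *.
  destruct (frame_bound m n A Ainv ltac:(lia) Hu hAinv) as [Hq Hframe].
  change (1 / (frob2 m n A * Ainv ^ 2)) with q in Hq, Hframe.
  destruct (coherence_bounds m n A Hm hpar) as (HDl & HD & Hpair).
  fold Dl dl in HDl, HD, Hpair.
  change (Rmin (coherence_gain dl) (coherence_gain Dl)) with D in HD, Hpair.
  assert (Heta : eta = 1 - (2 * q - q ^ 2 + D * q)) by (unfold eta, q, Rdiv; ring).
  assert (Hse : 0 <= sqrt eta < 1) by (rewrite Heta; apply rate_range; assumption).
  eapply Rle_trans.
  - apply (expected_error_iter m n A b (fun y => norm2 n (vsub x y)) (sqrt eta)
             (3 * (linf m w / sqrt (1 - Dl ^ 2))) Hm (proj1 Hse)).
    intro y. rewrite Heta.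
    apply (one_step_mean_error m n A q D Hu Hframe Hq HD Hm); try apply Hpair; auto.
    apply HDl.
  - apply Rplus_le_compat_l.
    assert (0 <= linf m w / sqrt (1 - Dl ^ 2)).
    { apply Rmult_le_pos; [apply linf_ge0|].
      left. apply Rinv_0_lt_compat, sqrt_lt_R0. nra. }
    replace (3 / (1 - sqrt eta) * (linf m w / sqrt (1 - Dl ^ 2)))
      with (3 * (linf m w / sqrt (1 - Dl ^ 2)) * (1 / (1 - sqrt eta))) by (unfold Rdiv; ring).
    apply Rmult_le_compat_l; [lra | apply geometric_sum_le, Hse].
Qed.
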